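(* Let $M_1>0$, $M_2>0$. Let $F(z)=\bar{z}G(z)+H(z)$, $z\in\mathbb{D}$, where $G,H$ are analytic in $\mathbb{D}$ with $G(0)=H(0)=0$, $G'(0)=H'(0)=1$, $|G(z)|\leq M_1$ and $|H(z)|\leq M_2$ for all $z\in\mathbb{D}$. Let $\rho_3$ be the unique root in $(0,1)$ of the equation $$1-\Big(M_2-\frac{1}{M_2}\Big)\frac{2r-r^2}{(1-r)^2}-\Big(M_1-\frac{1}{M_1}\Big)\frac{(3-2r)r^2}{(1-r)^2}-2r=0,$$ and $$\sigma_3=\rho_3-\rho_3^2-\Big(M_2-\frac{1}{M_2}\Big)\frac{\rho_3^2}{1-\rho_3}-\Big(M_1-\frac{1}{M_1}\Big)\frac{\rho_3^3}{1-\rho_3}.$$ Then $F$ is univalent in $\mathbb{D}_{\rho_3}$ and $F(\mathbb{D}_{\rho_3})\supseteq\mathbb{D}_{\sigma_3}$.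
   Context: $\mathbb{D}=\{z:|z|<1\}$ and $\mathbb{D}_r=\{z\in\mathbb{C}:|z|<r\}$. *)

From Stdlib Require Import Reals.
From Coquelicot Require Import Coquelicot.
Open Scope R_scope.

Definition in_disk (r : R) (z : C) : Prop := Cmod z < r.

Definition analytic_in_D (f : C -> C) : Prop :=
  exists a : nat -> C, forall z : C, in_disk 1 z ->
    is_series (fun n : nat => Cmult (a n) (pow_n z n)) (f z).

Definition univalent_on_disk (r : R) (f : C -> C) : Prop :=
  forall z w : C, in_disk r z -> in_disk r w -> f z = f w -> z = w.

Definition eq_rho3 (M1 M2 r : R) : R :=
  1 - (M2 - 1 / M2) * ((2 * r - r ^ 2) / (1 - r) ^ 2)
    - (M1 - 1 / M1) * ((3 - 2 * r) * r ^ 2 / (1 - r) ^ 2)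
    - 2 * r.

Definition sigma3_of (M1 M2 rho : R) : R :=
  rho - rho ^ 2 - (M2 - 1 / M2) * (rho ^ 2 / (1 - rho))
    - (M1 - 1 / M1) * (rho ^ 3 / (1 - rho)).

From Stdlib Require Import Reals Lra Lia.
From Coquelicot Require Import Coquelicot.
Open Scope R_scope.

(* Write [F z = z + E z] with [E z = conj z * G z + (H z - z)].  For [f = z + sum_(k>=2) a_k z^k]
   analytic and bounded by [M] in the unit disk, averaging [f (r w) * conj (w^n) * (v + w^(n-1)/M)^2]
   over the N-th roots of unity [w], where [|v| = 1] rotates [a_n] onto [|a_n|], gives
   [|a_n| r^n + 2r/M <= M + 1/M]; letting [r -> 1] yields [|a_n| <= M - 1/M].  Summing these
   bounds shows that on [|z| <= r] the function [E] is Lipschitz with constant [1 - eq_rho3 r]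
   and satisfies [|E z| <= r - sigma3 r].  As [eq_rho3] decreases and vanishes at [rho3], [E] is
   a strict contraction on every disk [|z| <= r < rho3]: so [F] is injective on [D_rho3], and for
   [|w| < sigma3] the map [z |-> w - E z] sends such a closed disk into itself, its fixed point
   solving [F z = w]. *)

(** * Finite sums *)

(* [csum u n = u 0 + ... + u (n-1)]: the bound is exclusive, unlike Coquelicot's [sum_n]. *)
Fixpoint csum (u : nat -> C) (n : nat) : C :=
  match n with O => RtoC 0 | S n => (csum u n + u n)%C end.

Fixpoint rsum (u : nat -> R) (n : nat) : R :=
  match n with O => 0 | S n => rsum u n + u n end.

Lemma csum_ext u v n : (forall k, (k < n)%nat -> u k = v k) -> csum u n = csum v n.
Proof. induction n as [|n IH]; intros Huv; simpl; auto. rewrite IH, Huv; auto. Qed.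

Lemma csum_plus u v n : csum (fun k => u k + v k)%C n = (csum u n + csum v n)%C.
Proof. induction n as [|n IH]; simpl; [ring|]. rewrite IH. ring. Qed.

Lemma csum_minus u v n : csum (fun k => u k - v k)%C n = (csum u n - csum v n)%C.
Proof. induction n as [|n IH]; simpl; [ring|]. rewrite IH. ring. Qed.

Lemma csum_mult_l c u n : csum (fun k => c * u k)%C n = (c * csum u n)%C.
Proof. induction n as [|n IH]; simpl; [ring|]. rewrite IH. ring. Qed.

Lemma csum_mult_r c u n : csum (fun k => u k * c)%C n = (csum u n * c)%C.
Proof. induction n as [|n IH]; simpl; [ring|]. rewrite IH. ring. Qed.

Lemma csum_const c n : csum (fun _ => c) n = (INR n * c)%C.
Proof.
  induction n as [|n IH]; cbn [csum]; [simpl; ring|].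
  rewrite IH, S_INR, RtoC_plus. ring.
Qed.

Lemma csum_add u p n : csum u (p + n) = (csum u p + csum (fun k => u (p + k)%nat) n)%C.
Proof.
  induction n as [|n IH]; simpl; [rewrite Nat.add_0_r; ring|].
  rewrite Nat.add_succ_r. simpl. rewrite IH. ring.
Qed.

Lemma csum_swap (w : nat -> nat -> C) n l :
  csum (fun j => csum (w j) l) n = csum (fun k => csum (fun j => w j k) n) l.
Proof.
  induction n as [|n IH]; simpl.
  - symmetry. rewrite (csum_const 0 l). ring.
  - rewrite IH, <- csum_plus. reflexivity.
Qed.

Lemma csum_indicator i n (c : C) :
  (i < n)%nat -> csum (fun k => if Nat.eqb k i then c else RtoC 0) n = c.
Proof.
  induction n as [|n IH]; intros Hi; [lia|]. simpl.
  destruct (Nat.eqb_spec n i) as [->|Hne].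
  - rewrite (csum_ext _ (fun _ => RtoC 0)), csum_const; [ring|].
    intros k Hk. destruct (Nat.eqb_spec k i); [lia|auto].
  - rewrite IH by lia. ring.
Qed.

Lemma RtoC_rsum u n : RtoC (rsum u n) = csum (fun k => RtoC (u k)) n.
Proof. induction n as [|n IH]; simpl; auto. rewrite RtoC_plus, IH. reflexivity. Qed.

Lemma Cmod_csum_le u n : Cmod (csum u n) <= rsum (fun k => Cmod (u k)) n.
Proof.
  induction n as [|n IH]; simpl; [rewrite Cmod_0; lra|].
  eapply Rle_trans; [apply Cmod_triangle|lra].
Qed.

Lemma rsum_mult_l c u n : rsum (fun k => c * u k) n = c * rsum u n.
Proof. induction n as [|n IH]; simpl; [ring|]. rewrite IH. ring. Qed.

Lemma rsum_const c n : rsum (fun _ => c) n = INR n * c.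
Proof. induction n as [|n IH]; cbn [rsum]; [simpl; ring|]. rewrite IH, S_INR. ring. Qed.

Lemma rsum_shift u n : rsum u (S n) = u O + rsum (fun k => u (S k)) n.
Proof. induction n as [|n IH]; simpl in *; [ring|]. rewrite IH. ring. Qed.

Lemma rsum_le u v n : (forall k, (k < n)%nat -> u k <= v k) -> rsum u n <= rsum v n.
Proof.
  induction n as [|n IH]; intros Huv; simpl; [lra|].
  assert (u n <= v n) by auto. assert (rsum u n <= rsum v n) by auto. lra.
Qed.

Lemma rsum_nonneg u n : (forall k, (k < n)%nat -> 0 <= u k) -> 0 <= rsum u n.
Proof. intros Hu. rewrite <- (Rmult_0_r (INR n)), <- rsum_const. apply rsum_le. exact Hu. Qed.

Lemma rsum_term_le u n k :
  (forall i, (i < n)%nat -> 0 <= u i) -> (k < n)%nat -> u k <= rsum u n.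
Proof.
  induction n as [|n IH]; intros Hu Hk; [lia|]. simpl.
  assert (0 <= rsum u n) by (apply rsum_nonneg; auto).
  destruct (Nat.eq_dec k n) as [->|Hne]; [lra|].
  assert (u k <= rsum u n) by (apply IH; auto; lia). assert (0 <= u n) by auto. lra.
Qed.

Lemma rsum_geom_le q n : 0 <= q < 1 -> rsum (fun k => q ^ k) n <= 1 / (1 - q).
Proof.
  intros Hq.
  assert (Hsum : rsum (fun k => q ^ k) n = (1 - q ^ n) / (1 - q)).
  { induction n as [|n IH]; simpl; [field; lra|]. rewrite IH. field. lra. }
  rewrite Hsum. apply Rmult_le_compat_r; [apply Rlt_le, Rinv_0_lt_compat; lra|].
  assert (0 <= q ^ n) by (apply pow_le; lra). lra.
Qed.

Lemma rsum_geom_deriv_le r n :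
  0 <= r < 1 -> rsum (fun k => INR (S k) * r ^ k) n <= 1 / (1 - r) ^ 2.
Proof.
  intros Hr.
  assert (Hsum : rsum (fun k => INR (S k) * r ^ k) n
                 = (1 - INR (S n) * r ^ n + INR n * r ^ S n) / (1 - r) ^ 2).
  { induction n as [|n IH]; cbn [rsum]; [simpl; field; lra|].
    rewrite IH, !S_INR. simpl. field. lra. }
  rewrite Hsum. apply Rmult_le_compat_r; [apply Rlt_le, Rinv_0_lt_compat, pow_lt; lra|].
  assert (0 <= r ^ n) by (apply pow_le; lra).
  assert (0 <= INR n * (1 - r)) by (apply Rmult_le_pos; [apply pos_INR|lra]).
  rewrite S_INR. simpl. nra.
Qed.

(** * Roots of unity *)

Definition cis (x : R) : C := (cos x, sin x).

Lemma cis_add x y : cis (x + y) = (cis x * cis y)%C.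
Proof. unfold cis, Cmult; simpl. rewrite cos_plus, sin_plus. f_equal; ring. Qed.

Lemma cis_0 : cis 0 = RtoC 1.
Proof. unfold cis, RtoC. rewrite cos_0, sin_0. reflexivity. Qed.

Lemma cis_pow x p : (cis x ^ p)%C = cis (INR p * x).
Proof.
  induction p as [|p IH]; [simpl; rewrite Rmult_0_l, cis_0; reflexivity|].
  rewrite Cpow_S, IH, <- cis_add, S_INR. f_equal. ring.
Qed.

Lemma Cconj_cis x : Cconj (cis x) = cis (- x).
Proof. unfold cis, Cconj; simpl. rewrite cos_neg, sin_neg. reflexivity. Qed.

Lemma Cmod_cis x : Cmod (cis x) = 1.
Proof.
  unfold Cmod, cis; simpl fst; simpl snd. rewrite <- sqrt_1. f_equal.
  rewrite <- (sin2_cos2 x). unfold Rsqr. ring.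
Qed.

Lemma cis_2PI_mult p : cis (2 * PI * INR p) = RtoC 1.
Proof.
  unfold cis, RtoC. replace (2 * PI * INR p) with (0 + 2 * INR p * PI) by ring.
  rewrite cos_period, sin_period, cos_0, sin_0. reflexivity.
Qed.

Lemma cis_neq_1 x : 0 < Rabs x < 2 * PI -> cis x <> RtoC 1.
Proof.
  intros Hx Hcis. injection Hcis as Hcos _.
  replace x with (2 * (x / 2)) in Hcos by field. rewrite cos_2a_sin in Hcos.
  assert (Hsin : sin (x / 2) <> 0).
  { destruct (Rle_dec 0 x).
    - rewrite Rabs_right in Hx by lra. pose proof (sin_gt_0 (x / 2)). lra.
    - rewrite Rabs_left in Hx by lra. pose proof (sin_gt_0 (- (x / 2))).
      rewrite sin_neg in *. lra. }
  apply Hsin. nra.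
Qed.

Lemma csum_pow_geom (w : C) n : (csum (fun j => w ^ j) n * (w - 1))%C = (w ^ n - 1)%C.
Proof. induction n as [|n IH]; cbn [csum Cpow]; [ring|]. rewrite Cmult_plus_distr_r, IH. ring. Qed.

Lemma csum_pow_root_unity (w : C) n :
  (w ^ n)%C = RtoC 1 -> w <> RtoC 1 -> csum (fun j => w ^ j)%C n = RtoC 0.
Proof.
  intros Hn Hw. pose proof (csum_pow_geom w n) as Hgeom.
  rewrite Hn in Hgeom. replace (1 - 1)%C with (RtoC 0) in Hgeom by ring.
  destruct (Ceq_dec (csum (fun j => w ^ j)%C n) 0) as [Hz|Hz]; auto.
  exfalso. apply (Cmult_neq_0 _ _ Hz (Cminus_eq_contra _ _ Hw)), Hgeom.
Qed.

Definition unity_root (n j : nat) : C := cis (INR j * (2 * PI / INR n)).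

Lemma Cmod_unity_root_pow n j k : Cmod (unity_root n j ^ k)%C = 1.
Proof. rewrite Cmod_pow. unfold unity_root. rewrite Cmod_cis. apply pow1. Qed.

Lemma csum_unity_root_orth n p q : (p < n)%nat -> (q < n)%nat ->
  csum (fun j => unity_root n j ^ p * Cconj (unity_root n j ^ q))%C n
  = if Nat.eqb p q then RtoC (INR n) else RtoC 0.
Proof.
  intros Hp Hq.
  assert (Hn : 0 < INR n) by (apply lt_0_INR; lia).
  set (x := (INR p - INR q) * (2 * PI / INR n)).
  rewrite (csum_ext _ (fun j => cis x ^ j)%C).
  2:{ intros j _. unfold unity_root. rewrite !cis_pow, Cconj_cis, <- cis_add.
      f_equal. unfold x. ring. }
  destruct (Nat.eqb_spec p q) as [<-|Hpq].
  - unfold x. rewrite Rminus_diag, Rmult_0_l, cis_0.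
    rewrite (csum_ext _ (fun _ => RtoC 1)) by (intros; apply Cpow_1_l).
    rewrite csum_const. ring.
  - apply csum_pow_root_unity.
    + rewrite cis_pow.
      replace (INR n * x) with (2 * PI * INR p + - (2 * PI * INR q)) by (unfold x; field; lra).
      rewrite cis_add, <- Cconj_cis, !cis_2PI_mult. unfold Cconj, RtoC; simpl.
      rewrite Ropp_0. unfold Cmult; simpl. f_equal; ring.
    + apply cis_neq_1.
      assert (Hp1 : INR p + 1 <= INR n) by (rewrite <- S_INR; apply le_INR; lia).
      assert (Hq1 : INR q + 1 <= INR n) by (rewrite <- S_INR; apply le_INR; lia).
      assert (Hsep : INR p + 1 <= INR q \/ INR q + 1 <= INR p).
      { destruct (Nat.lt_total p q) as [H|[H|H]]; [left|lia|right];
          rewrite <- S_INR; apply le_INR; lia. }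
      pose proof (pos_INR p). pose proof (pos_INR q).
      assert (Hd : 1 <= Rabs (INR p - INR q) <= INR n - 1)
        by (unfold Rabs; destruct Rcase_abs; lra).
      assert (Hth : 0 < 2 * PI / INR n) by (apply Rdiv_lt_0_compat; [pose proof PI_RGT_0|]; lra).
      unfold x. rewrite Rabs_mult, (Rabs_right (2 * PI / INR n)) by lra. split; [nra|].
      apply Rle_lt_trans with ((INR n - 1) * (2 * PI / INR n)); [apply Rmult_le_compat_r; lra|].
      replace ((INR n - 1) * (2 * PI / INR n)) with (2 * PI - 2 * PI / INR n) by (field; lra).
      lra.
Qed.

(** * Power series in the unit disk *)

Lemma Ceq_of_Cmod_sub_small x y : (forall eps, 0 < eps -> Cmod (x - y)%C < eps) -> x = y.
Proof.
  intros Hsmall. apply Ceq_minus, Cmod_eq_0, Rle_antisym; [|apply Cmod_ge_0].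
  apply Rle_plus_epsilon. intros eps Heps. specialize (Hsmall eps Heps). lra.
Qed.

Lemma is_series_csum_near (u : nat -> C) l :
  is_series u l -> forall eps, 0 < eps ->
  exists N, forall n, (N <= n)%nat -> Cmod (csum u n - l)%C < eps.
Proof.
  intros Hu eps Heps.
  assert (Heps2 : 0 < eps / 2) by lra.
  destruct (proj1 (filterlim_locally (F := eventually) (sum_n u) l) Hu (mkposreal _ Heps2))
    as [N HN].
  exists (S N). intros [|n] Hn; [lia|].
  assert (Hcsum : csum u (S n) = sum_n u n).
  { clear. induction n as [|n IH]; [rewrite sum_O; simpl; ring|].
    rewrite sum_Sn, <- IH. reflexivity. }
  specialize (HN n ltac:(lia)). apply C_NormedModule_mixin_compat2 in HN. simpl in HN.
  assert (sqrt 2 < 2) by (rewrite <- (sqrt_square 2) at 2 by lra; apply sqrt_lt_1; lra).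
  rewrite Hcsum. eapply Rlt_le_trans; [exact HN|]. nra.
Qed.

Lemma Cmod_mult_RtoC_pow (c : C) x k : 0 <= x -> Cmod (c * RtoC x ^ k)%C = Cmod c * x ^ k.
Proof.
  intros Hx. rewrite Cmod_mult, <- RtoC_pow, Cmod_R, Rabs_right; auto.
  apply Rle_ge, pow_le, Hx.
Qed.

Lemma is_derive_along_R (f : C -> C) z d :
  is_derive (K := C_AbsRing) (V := C_NormedModule) f z d ->
  forall eps, 0 < eps -> exists del, 0 < del /\ forall t : R, Rabs t < del ->
    Cmod (f (z + t) - f z - t * d)%C <= eps * Rabs t.
Proof.
  intros [_ Hd] eps Heps.
  destruct (Hd z (fun P HP => HP) (mkposreal eps Heps)) as [del Hdel].
  exists del. split; [apply cond_pos|]. intros t Ht.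
  assert (Hball : @ball (AbsRing_UniformSpace C_AbsRing) z del (z + t)%C).
  { change (Cmod (z + t - z)%C < del).
    replace (z + t - z)%C with (RtoC t) by ring. rewrite Cmod_R. exact Ht. }
  specialize (Hdel _ Hball).
  change (Cmod (f (z + t) - f z - (z + t - z) * d)%C <= eps * Cmod (z + t - z)%C) in Hdel.
  replace (z + t - z)%C with (RtoC t) in Hdel by ring. rewrite Cmod_R in Hdel. exact Hdel.
Qed.

Section PowerSeries.

Variables (f : C -> C) (a : nat -> C).
Hypothesis f_series : forall z, Cmod z < 1 -> is_series (fun k => a k * z ^ k)%C (f z).

Lemma coef_geom_bound r : 0 < r < 1 -> exists B, 0 <= B /\ forall k, Cmod (a k) * r ^ k <= B.
Proof.
  intros Hr.
  assert (Hz : Cmod (RtoC r) < 1) by (rewrite Cmod_R, Rabs_right; lra).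
  destruct (is_series_csum_near _ _ (f_series _ Hz) 1 ltac:(lra)) as [N HN].
  set (u k := Cmod (a k) * r ^ k).
  assert (Hu : forall k, 0 <= u k) by (intros k; apply Rmult_le_pos; [apply Cmod_ge_0|apply pow_le; lra]).
  assert (Hsum : 0 <= rsum u N) by (apply rsum_nonneg; auto).
  exists (2 + rsum u N). split; [lra|]. intros k. fold (u k).
  destruct (Nat.lt_ge_cases k N) as [Hk|Hk].
  - assert (u k <= rsum u N) by (apply rsum_term_le; auto). lra.
  - pose proof (HN k Hk) as Hk1. pose proof (HN (S k) ltac:(lia)) as Hk2. simpl csum in Hk2.
    set (s := csum _ k) in Hk1, Hk2.
    assert (Hterm : Cmod (a k * RtoC r ^ k)%C < 2).
    { replace (a k * RtoC r ^ k)%C with ((s + a k * RtoC r ^ k - f r) - (s - f r))%C by ring.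
      eapply Rle_lt_trans; [apply Cmod_triangle|]. rewrite Cmod_opp. lra. }
    rewrite Cmod_mult_RtoC_pow in Hterm by lra. fold (u k) in Hterm. lra.
Qed.

Lemma series_sub_le z X b : Cmod z < 1 ->
  (forall L, Cmod (csum (fun k => a k * z ^ k)%C (2 + L) - X)%C <= b) ->
  Cmod (f z - X)%C <= b.
Proof.
  intros Hz Hpartial. apply Rle_plus_epsilon. intros eps Heps.
  destruct (is_series_csum_near _ _ (f_series _ Hz) eps Heps) as [N HN].
  specialize (HN (2 + N)%nat ltac:(lia)). specialize (Hpartial N).
  set (s := csum _ (2 + N)) in *.
  replace (f z - X)%C with (- (s - f z) + (s - X))%C by ring.
  eapply Rle_trans; [apply Cmod_triangle|]. rewrite Cmod_opp. lra.
Qed.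

Lemma series_diff_sub_le z1 z2 X b : Cmod z1 < 1 -> Cmod z2 < 1 ->
  (forall L, Cmod (csum (fun k => a k * z1 ^ k)%C (2 + L)
                   - csum (fun k => a k * z2 ^ k)%C (2 + L) - X)%C <= b) ->
  Cmod (f z1 - f z2 - X)%C <= b.
Proof.
  intros Hz1 Hz2 Hpartial. apply Rle_plus_epsilon. intros eps Heps.
  destruct (is_series_csum_near _ _ (f_series _ Hz1) (eps / 2) ltac:(lra)) as [N1 HN1].
  destruct (is_series_csum_near _ _ (f_series _ Hz2) (eps / 2) ltac:(lra)) as [N2 HN2].
  specialize (HN1 (2 + (N1 + N2))%nat ltac:(lia)). specialize (HN2 (2 + (N1 + N2))%nat ltac:(lia)).
  specialize (Hpartial (N1 + N2)%nat).
  set (s1 := csum (fun k => a k * z1 ^ k)%C (2 + (N1 + N2))) in *.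
  set (s2 := csum (fun k => a k * z2 ^ k)%C (2 + (N1 + N2))) in *.
  replace (f z1 - f z2 - X)%C with (- (s1 - f z1) + (s2 - f z2) + (s1 - s2 - X))%C by ring.
  eapply Rle_trans; [apply Cmod_triangle|].
  eapply Rle_trans; [apply Rplus_le_compat_r, Cmod_triangle|]. rewrite Cmod_opp. lra.
Qed.

Lemma csum_series_head z L :
  csum (fun k => a k * z ^ k)%C (2 + L)
  = (a O + a 1%nat * z + csum (fun k => a (2 + k)%nat * z ^ (2 + k))%C L)%C.
Proof. rewrite csum_add. simpl. ring. Qed.

Lemma coef0_eq : a O = f (RtoC 0).
Proof.
  symmetry. apply Ceq_of_Cmod_sub_small. intros eps Heps.
  apply Rle_lt_trans with 0; auto.
  apply series_sub_le; [rewrite Cmod_0; lra|]. intros L.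
  rewrite csum_series_head, (csum_ext _ (fun _ => RtoC 0)), csum_const.
  - replace (a O + a 1%nat * 0 + INR L * 0 - a O)%C with (RtoC 0) by ring. rewrite Cmod_0. lra.
  - intros k _. simpl. ring.
Qed.

Lemma series_linear_remainder : exists B, 0 <= B /\ forall t, 0 < t <= 1/4 ->
  Cmod (f t - (a O + a 1%nat * t))%C <= 8 * B * t ^ 2.
Proof.
  destruct (coef_geom_bound (1/2) ltac:(lra)) as [B [HB0 HB]].
  exists B. split; auto. intros t Ht. apply series_sub_le; [rewrite Cmod_R, Rabs_right; lra|].
  intros L. rewrite csum_series_head.
  replace (a O + a 1%nat * t + _ - (a O + a 1%nat * t))%C
    with (csum (fun k => a (2 + k)%nat * t ^ (2 + k))%C L) by ring.
  eapply Rle_trans; [apply Cmod_csum_le|].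
  apply Rle_trans with (rsum (fun k => (4 * B * t ^ 2) * (2 * t) ^ k) L).
  - apply rsum_le. intros k _. rewrite Cmod_mult_RtoC_pow by lra.
    replace (t ^ (2 + k)) with ((1/2) ^ (2 + k) * (2 * t) ^ (2 + k))
      by (rewrite <- Rpow_mult_distr; f_equal; field).
    replace ((2 * t) ^ (2 + k)) with (4 * t ^ 2 * (2 * t) ^ k) by (simpl; ring).
    assert (0 <= 4 * t ^ 2 * (2 * t) ^ k) by (apply Rmult_le_pos; [nra|apply pow_le; lra]).
    rewrite <- Rmult_assoc. replace (4 * B * t ^ 2 * (2 * t) ^ k) with (B * (4 * t ^ 2 * (2 * t) ^ k)) by ring.
    apply Rmult_le_compat_r; auto.
  - rewrite rsum_mult_l.
    assert (Hgeom : rsum (fun k => (2 * t) ^ k) L <= 2).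
    { eapply Rle_trans; [apply rsum_geom_le; lra|].
      apply Rmult_le_reg_r with (1 - 2 * t); [lra|]. unfold Rdiv. rewrite Rmult_assoc, Rinv_l; lra. }
    assert (0 <= 4 * B * t ^ 2) by (apply Rmult_le_pos; nra).
    apply Rle_trans with (4 * B * t ^ 2 * 2); [apply Rmult_le_compat_l; auto|lra].
Qed.

Lemma coef1_eq_derive d :
  is_derive (K := C_AbsRing) (V := C_NormedModule) f (RtoC 0) d -> a 1%nat = d.
Proof.
  intros Hd. destruct series_linear_remainder as [B [HB0 Hrem]].
  apply Ceq_of_Cmod_sub_small. intros e He.
  destruct (is_derive_along_R _ _ _ Hd (e / 4) ltac:(lra)) as [del [Hdel Hdiff]].
  set (t := Rmin (del / 2) (Rmin (1/4) (e / (32 * B + 4)))).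
  assert (Ht0 : 0 < t) by (apply Rmin_pos; [lra|apply Rmin_pos; [lra|apply Rdiv_lt_0_compat; lra]]).
  assert (Ht1 : t <= del / 2) by apply Rmin_l.
  assert (Ht2 : t <= 1/4) by (eapply Rle_trans; [apply Rmin_r|apply Rmin_l]).
  assert (Ht3 : t <= e / (32 * B + 4)) by (eapply Rle_trans; [apply Rmin_r|apply Rmin_r]).
  specialize (Hrem t ltac:(lra)). specialize (Hdiff t ltac:(rewrite Rabs_right; lra)).
  rewrite Cplus_0_l, Rabs_right in Hdiff by lra. rewrite <- coef0_eq in Hdiff.
  assert (Hlin : Cmod (a 1%nat - d)%C * t <= e / 4 * t + 8 * B * t ^ 2).
  { rewrite <- (Rabs_right t) at 1 by lra. rewrite <- Cmod_R, <- Cmod_mult.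
    replace ((a 1%nat - d) * t)%C
      with ((f t - a O - t * d) - (f t - (a O + a 1%nat * t)))%C by ring.
    eapply Rle_trans; [apply Cmod_triangle|]. rewrite Cmod_opp. lra. }
  assert (Hslope : Cmod (a 1%nat - d)%C <= e / 4 + 8 * B * t).
  { apply Rmult_le_reg_r with t; auto. nra. }
  assert (8 * B * t <= e / 4).
  { apply Rle_trans with (8 * B * (e / (32 * B + 4))); [apply Rmult_le_compat_l; lra|].
    apply Rmult_le_reg_r with (32 * B + 4); [lra|]. field_simplify; nra. }
  lra.
Qed.

End PowerSeries.

(** * The coefficient bound [|a_n| <= M - 1/M] *)

Lemma Cmult_Cconj_unimodular c : Cmod c = 1 -> (c * Cconj c)%C = RtoC 1.
Proof. intros Hc. rewrite <- Cmod2_conj, Hc. f_equal. ring. Qed.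

Lemma Cconj_RtoC x : Cconj (RtoC x) = RtoC x.
Proof. unfold Cconj, RtoC; simpl. f_equal. ring. Qed.

Lemma eventually_forall_lt (P : nat -> nat -> Prop) N :
  (forall j, (j < N)%nat -> exists L0, forall L, (L0 <= L)%nat -> P j L) ->
  exists L0, forall L, (L0 <= L)%nat -> forall j, (j < N)%nat -> P j L.
Proof.
  induction N as [|N IH]; intros HP; [exists O; intros; lia|].
  destruct IH as [L1 H1]; [intros j Hj; apply HP; lia|].
  destruct (HP N ltac:(lia)) as [L2 H2].
  exists (L1 + L2)%nat. intros L HL j Hj.
  destruct (Nat.eq_dec j N) as [->|]; [apply H2; lia|apply H1; lia].
Qed.

Section RootsOfUnityAverage.

Variables (f : C -> C) (a : nat -> C) (M : R).
Hypothesis f_series : forall z, Cmod z < 1 -> is_series (fun k => a k * z ^ k)%C (f z).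
Hypothesis a0 : a O = RtoC 0.
Hypothesis a1 : a 1%nat = RtoC 1.
Hypothesis M_pos : 0 < M.
Hypothesis f_bounded : forall z, Cmod z < 1 -> Cmod (f z) <= M.

Variables (n N : nat) (v : C).
Hypothesis n_ge2 : (2 <= n)%nat.
Hypothesis N_large : (3 * n < N)%nat.
Hypothesis v_unimodular : Cmod v = 1.
Hypothesis v_rotates : (v * a n)%C = RtoC (Cmod (a n)).

Let s := / M.
Let w j := unity_root N j.

(* Averaging against this weight over the N-th roots of unity isolates
   [v * (a_n r^n + 2 s r)], while its modulus [|v + s w^(n-1)|^2] averages to [1 + s^2]. *)
Let weight j := (Cconj (w j ^ n) * (v + s * w j ^ (n - 1)) ^ 2)%C.
Let moment k := csum (fun j => w j ^ k * weight j)%C N.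

Let s_pos : 0 < s := Rinv_0_lt_compat M M_pos.
Let Cmod_w_pow j k : Cmod (w j ^ k)%C = 1 := Cmod_unity_root_pow N j k.

Lemma Cmod_scaled_root r j : 0 <= r -> Cmod (r * w j)%C = r.
Proof.
  intros Hr. rewrite Cmod_mult, Cmod_R, Rabs_right by lra.
  rewrite <- (Cpow_1_r (w j)), Cmod_w_pow. ring.
Qed.

Lemma Cmod_weight j : Cmod (weight j) = Cmod (v + s * w j ^ (n - 1))%C ^ 2.
Proof. unfold weight. rewrite Cmod_mult, Cmod_conj, Cmod_w_pow, Cmod_pow. ring. Qed.

Lemma Cmod_weight_le j : Cmod (weight j) <= (1 + s) ^ 2.
Proof.
  rewrite Cmod_weight. pose proof s_pos.
  apply pow_incr. split; [apply Cmod_ge_0|].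
  eapply Rle_trans; [apply Cmod_triangle|].
  rewrite Cmod_mult, Cmod_w_pow, v_unimodular, Cmod_R, Rabs_right; lra.
Qed.

Lemma Cmod_moment_le k : Cmod (moment k) <= INR N * (1 + s) ^ 2.
Proof.
  eapply Rle_trans; [apply Cmod_csum_le|]. rewrite <- rsum_const. apply rsum_le.
  intros j _. rewrite Cmod_mult, Cmod_w_pow, Rmult_1_l. apply Cmod_weight_le.
Qed.

Lemma rsum_Cmod_weight : rsum (fun j => Cmod (weight j)) N = INR N * (1 + s ^ 2).
Proof.
  apply RtoC_inj. rewrite RtoC_rsum.
  rewrite (csum_ext _ (fun j => 1 + (s * v) * (w j ^ 0 * Cconj (w j ^ (n - 1)))
                               + (s * Cconj v) * (w j ^ (n - 1) * Cconj (w j ^ 0))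
                               + s ^ 2 * 1)%C).
  - rewrite !csum_plus, !csum_mult_l. unfold w. rewrite !csum_unity_root_orth by lia.
    rewrite (proj2 (Nat.eqb_neq 0 (n - 1))), (proj2 (Nat.eqb_neq (n - 1) 0)) by lia.
    rewrite !csum_const, RtoC_mult, RtoC_plus, RtoC_pow. ring.
  - intros j _. rewrite Cmod_weight, Cmod2_conj, Cplus_conj, Cmult_conj, Cconj_RtoC.
    pose proof (Cmult_Cconj_unimodular v v_unimodular) as Hv.
    pose proof (Cmult_Cconj_unimodular _ (Cmod_w_pow j (n - 1))) as Hw.
    change (w j ^ 0)%C with (RtoC 1). rewrite Cconj_RtoC.
    transitivity (v * Cconj v + s * v * Cconj (w j ^ (n - 1)) + s * Cconj v * w j ^ (n - 1)
                  + s * s * (w j ^ (n - 1) * Cconj (w j ^ (n - 1))))%C; [ring|].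
    rewrite Hv, Hw. simpl. ring.
Qed.

Lemma moment_low k : (k < N - 2 * n)%nat ->
  moment k = (v * v * (if Nat.eqb k n then RtoC (INR N) else RtoC 0)
              + 2 * s * v * (if Nat.eqb (k + (n - 1)) n then RtoC (INR N) else RtoC 0)
              + s ^ 2 * (if Nat.eqb (k + 2 * (n - 1)) n then RtoC (INR N) else RtoC 0))%C.
Proof.
  intros Hk. unfold moment.
  rewrite (csum_ext _ (fun j => v * v * (w j ^ k * Cconj (w j ^ n))
               + 2 * s * v * (w j ^ (k + (n - 1)) * Cconj (w j ^ n))
               + s ^ 2 * (w j ^ (k + 2 * (n - 1)) * Cconj (w j ^ n)))%C).
  - rewrite !csum_plus, !csum_mult_l. unfold w. rewrite !csum_unity_root_orth by lia. reflexivity.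
  - intros j _. unfold weight. rewrite !Cpow_add_r, (Nat.mul_comm 2), Cpow_mult_r. ring.
Qed.

Lemma moment_head_sum (r : R) :
  csum (fun k => a k * r ^ k * moment k)%C (N - 2 * n)
  = (INR N * v * RtoC (Cmod (a n) * r ^ n + 2 * s * r))%C.
Proof.
  rewrite (csum_ext _ (fun k => (if Nat.eqb k n then INR N * (v * v * (a n * r ^ n)) else 0)
                              + (if Nat.eqb k 1 then INR N * (2 * s * (v * r)) else 0))%C).
  - rewrite csum_plus, !csum_indicator by lia.
    rewrite RtoC_plus, !RtoC_mult, RtoC_pow, <- v_rotates. ring.
  - intros k Hk. rewrite moment_low by exact Hk.
    destruct (Nat.eqb_spec (k + 2 * (n - 1)) n) as [Hk0|Hk0].
    { replace k with O by lia. rewrite a0.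
      destruct (Nat.eqb_spec 0 n); [lia|]. destruct (Nat.eqb_spec 0 1); [lia|]. ring. }
    destruct (Nat.eqb_spec (k + (n - 1)) n) as [Hk1|Hk1].
    { replace k with 1%nat by lia. rewrite a1.
      destruct (Nat.eqb_spec 1 n); [lia|]. cbn [Nat.eqb]. ring. }
    destruct (Nat.eqb_spec k 1) as [->|]; [lia|].
    destruct (Nat.eqb_spec k n) as [->|]; ring.
Qed.

Lemma weighted_partial_sum_eq (r : R) L :
  csum (fun j => csum (fun k => a k * (r * w j) ^ k)%C L * weight j)%C N
  = csum (fun k => a k * r ^ k * moment k)%C L.
Proof.
  rewrite (csum_ext _ (fun j => csum (fun k => a k * (r * w j) ^ k * weight j)%C L))
    by (intros; rewrite csum_mult_r; reflexivity).
  rewrite csum_swap. apply csum_ext. intros k _.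
  unfold moment. rewrite <- csum_mult_l. apply csum_ext. intros j _.
  rewrite Cpow_mult_l. ring.
Qed.

Lemma moment_tail_le r B q L : 0 <= r -> 0 <= B -> 0 <= q < 1 ->
  (forall k, Cmod (a k) * r ^ k <= B * q ^ k) ->
  Cmod (csum (fun k => a (N - 2 * n + k)%nat * r ^ (N - 2 * n + k) * moment (N - 2 * n + k))%C L)
  <= INR N * (1 + s) ^ 2 * (B * q ^ (N - 2 * n) / (1 - q)).
Proof.
  intros Hr HB Hq Hcoef. set (P := (N - 2 * n)%nat).
  pose proof s_pos.
  assert (HN : 0 <= INR N * (1 + s) ^ 2) by (apply Rmult_le_pos; [apply pos_INR|apply pow_le; lra]).
  assert (HqP : 0 <= B * q ^ P) by (apply Rmult_le_pos; [|apply pow_le]; lra).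
  eapply Rle_trans; [apply Cmod_csum_le|].
  apply Rle_trans with (rsum (fun k => (INR N * (1 + s) ^ 2 * (B * q ^ P)) * q ^ k) L).
  - apply rsum_le. intros k _. rewrite Cmod_mult, Cmod_mult_RtoC_pow by exact Hr.
    apply Rle_trans with ((B * q ^ (P + k)) * (INR N * (1 + s) ^ 2)).
    + apply Rmult_le_compat; [|apply Cmod_ge_0|apply Hcoef|apply Cmod_moment_le].
      apply Rmult_le_pos; [apply Cmod_ge_0|apply pow_le, Hr].
    + rewrite pow_add. right. ring.
  - rewrite rsum_mult_l.
    apply Rle_trans with (INR N * (1 + s) ^ 2 * (B * q ^ P) * (1 / (1 - q))).
    + apply Rmult_le_compat_l; [apply Rmult_le_pos; auto|apply rsum_geom_le, Hq].
    + right. field. lra.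
Qed.

Lemma weighted_value_sum_le r : 0 <= r < 1 ->
  Cmod (csum (fun j => f (r * w j) * weight j)%C N) <= M * (INR N * (1 + s ^ 2)).
Proof.
  intros Hr. eapply Rle_trans; [apply Cmod_csum_le|].
  rewrite <- rsum_Cmod_weight, <- rsum_mult_l. apply rsum_le. intros j _.
  rewrite Cmod_mult. apply Rmult_le_compat_r; [apply Cmod_ge_0|].
  apply f_bounded. rewrite Cmod_scaled_root; lra.
Qed.

Lemma weighted_partial_sum_near r eps : 0 <= r < 1 -> 0 < eps ->
  exists L, (N - 2 * n <= L)%nat /\
    Cmod (csum (fun j => csum (fun k => a k * (r * w j) ^ k)%C L * weight j)%C N
          - csum (fun j => f (r * w j) * weight j)%C N)%C <= INR N * ((1 + s) ^ 2 * eps).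
Proof.
  intros Hr Heps.
  destruct (eventually_forall_lt (fun j L =>
              Cmod (csum (fun k => a k * (r * w j) ^ k)%C L - f (r * w j))%C < eps) N)
    as [L0 HL0].
  { intros j _. apply is_series_csum_near, Heps. apply f_series.
    rewrite Cmod_scaled_root; lra. }
  exists (L0 + N)%nat. split; [lia|].
  rewrite <- csum_minus, <- rsum_const.
  eapply Rle_trans; [apply Cmod_csum_le|]. apply rsum_le. intros j Hj.
  replace (_ * weight j - _ * weight j)%C
    with ((csum (fun k => a k * (r * w j) ^ k)%C (L0 + N) - f (r * w j)) * weight j)%C by ring.
  rewrite Cmod_mult, Rmult_comm.
  apply Rmult_le_compat; [apply Cmod_ge_0|apply Cmod_ge_0|apply Cmod_weight_le|].
  apply Rlt_le, HL0; [lia|exact Hj].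
Qed.

Lemma coef_weighted_bound r B q : 0 <= r < 1 -> 0 <= B -> 0 <= q < 1 ->
  (forall k, Cmod (a k) * r ^ k <= B * q ^ k) ->
  Cmod (a n) * r ^ n + 2 * s * r
  <= M * (1 + s ^ 2) + (1 + s) ^ 2 * (B * q ^ (N - 2 * n) / (1 - q)).
Proof.
  intros Hr HB Hq Hcoef.
  assert (HN : 0 < INR N) by (apply lt_0_INR; lia).
  pose proof s_pos.
  assert (Hs2 : 0 < (1 + s) ^ 2) by (apply pow_lt; lra).
  set (X := Cmod (a n) * r ^ n + 2 * s * r).
  assert (HX : 0 <= X).
  { assert (0 <= Cmod (a n) * r ^ n) by (apply Rmult_le_pos; [apply Cmod_ge_0|apply pow_le; lra]).
    unfold X. nra. }
  apply Rle_plus_epsilon. intros eps Heps.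
  destruct (weighted_partial_sum_near r (eps / (1 + s) ^ 2) Hr) as [L [HL Hnear]].
  { apply Rdiv_lt_0_compat; lra. }
  replace (INR N * ((1 + s) ^ 2 * (eps / (1 + s) ^ 2))) with (INR N * eps) in Hnear by (field; lra).
  pose proof (moment_tail_le r B q (L - (N - 2 * n)) ltac:(lra) HB Hq Hcoef) as HT.
  pose proof (weighted_value_sum_le r Hr) as HS.
  set (P := (N - 2 * n)%nat) in *.
  set (T := csum (fun k => a (P + k)%nat * r ^ (P + k) * moment (P + k))%C (L - P)) in HT.
  set (S := csum (fun j => f (r * w j) * weight j)%C N) in *.
  set (Sp := csum (fun j => csum (fun k => a k * (r * w j) ^ k)%C L * weight j)%C N) in *.
  assert (HSp : Sp = (INR N * v * X + T)%C).
  { unfold Sp. rewrite weighted_partial_sum_eq.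
    replace L with (P + (L - P))%nat at 1 by lia. rewrite csum_add, moment_head_sum. reflexivity. }
  assert (HNX : INR N * X <= M * (INR N * (1 + s ^ 2)) + INR N * eps
                             + INR N * (1 + s) ^ 2 * (B * q ^ P / (1 - q))).
  { replace (INR N * X) with (Cmod (INR N * v * X)%C)
      by (rewrite !Cmod_mult, !Cmod_R, v_unimodular, !Rabs_right by lra; ring).
    replace (INR N * v * X)%C with (S + (Sp - S) - T)%C by (rewrite HSp; ring).
    eapply Rle_trans; [apply Cmod_triangle|]. rewrite Cmod_opp.
    eapply Rle_trans; [apply Rplus_le_compat_r, Cmod_triangle|]. lra. }
  apply Rmult_le_reg_l with (INR N); [exact HN|]. nra.
Qed.

End RootsOfUnityAverage.

Lemma unimodular_rotation (c : C) : exists v, Cmod v = 1 /\ (v * c)%C = RtoC (Cmod c).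
Proof.
  destruct (Ceq_dec c 0) as [->|Hc].
  - exists (RtoC 1). rewrite Cmod_1, Cmod_0. split; [reflexivity|ring].
  - assert (Hpos : 0 < Cmod c) by (apply Cmod_gt_0, Hc).
    exists (Cconj c * RtoC (/ Cmod c))%C. split.
    + rewrite Cmod_mult, Cmod_conj, Cmod_R, Rabs_right; [field; lra|].
      apply Rle_ge, Rlt_le, Rinv_0_lt_compat, Hpos.
    + transitivity (c * Cconj c * RtoC (/ Cmod c))%C; [ring|].
      rewrite <- Cmod2_conj, <- RtoC_mult. f_equal. field. lra.
Qed.

Lemma pow_ge_Bernoulli x n : 0 <= x <= 1 -> 1 - INR n * (1 - x) <= x ^ n.
Proof.
  intros Hx. induction n as [|n IH]; [simpl; lra|].
  rewrite S_INR. simpl.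
  assert (0 <= x * x ^ n) by (apply Rmult_le_pos; [lra|apply pow_le; lra]).
  destruct (Rle_dec 0 (1 - INR n * (1 - x))) as [Hpos|]; [|lra].
  assert (x * (1 - INR n * (1 - x)) <= x * x ^ n) by (apply Rmult_le_compat_l; lra).
  assert (0 <= INR n * ((1 - x) * (1 - x))) by (apply Rmult_le_pos; [apply pos_INR|nra]).
  nra.
Qed.

Section CoefficientBound.

Variables (f : C -> C) (a : nat -> C) (M : R).
Hypothesis f_series : forall z, Cmod z < 1 -> is_series (fun k => a k * z ^ k)%C (f z).
Hypothesis a0 : a O = RtoC 0.
Hypothesis a1 : a 1%nat = RtoC 1.
Hypothesis M_pos : 0 < M.
Hypothesis f_bounded : forall z, Cmod z < 1 -> Cmod (f z) <= M.

Lemma coef_radius_bound n r : (2 <= n)%nat -> 0 < r < 1 ->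
  Cmod (a n) * r ^ n + 2 * / M * r <= M * (1 + (/ M) ^ 2).
Proof.
  intros Hn Hr. set (s := / M).
  assert (Hs : 0 < s) by (apply Rinv_0_lt_compat, M_pos).
  destruct (unimodular_rotation (a n)) as [v [Hv Hva]].
  (* Bounding the coefficients on the larger circle of radius [(1 + r) / 2] makes [a_k r^k]
     decay like [q^k], so the tail left over by the averaging vanishes as [N] grows. *)
  destruct (coef_geom_bound f a f_series ((1 + r) / 2) ltac:(lra)) as [B [HB0 HB]].
  set (q := r / ((1 + r) / 2)).
  assert (Hq : 0 <= q < 1).
  { unfold q. split; [apply Rdiv_le_0_compat; lra|].
    apply Rmult_lt_reg_r with ((1 + r) / 2); [lra|]. unfold Rdiv. rewrite Rmult_assoc, Rinv_l; lra. }
  assert (Hcoef : forall k, Cmod (a k) * r ^ k <= B * q ^ k).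
  { intros k. replace (r ^ k) with (((1 + r) / 2) ^ k * q ^ k)
      by (rewrite <- Rpow_mult_distr; f_equal; unfold q; field; lra).
    rewrite <- Rmult_assoc. apply Rmult_le_compat_r; [apply pow_le; lra|apply HB]. }
  set (c := (1 + s) ^ 2 * B / (1 - q)).
  assert (Hc : 0 <= c).
  { apply Rmult_le_pos; [apply Rmult_le_pos; [apply pow_le; lra|exact HB0]|].
    apply Rlt_le, Rinv_0_lt_compat. lra. }
  apply Rle_plus_epsilon. intros eps Heps.
  destruct (pow_lt_1_zero q ltac:(rewrite Rabs_right; lra) (eps / (c + 1)) ltac:(apply Rdiv_lt_0_compat; lra))
    as [p0 Hp0].
  set (N := (p0 + 3 * n + 1)%nat).
  pose proof (coef_weighted_bound f a M f_series a0 a1 M_pos f_bounded n N v Hn ltac:(lia) Hv Hva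
                r B q ltac:(lra) HB0 Hq Hcoef) as Hbound.
  specialize (Hp0 (N - 2 * n)%nat ltac:(lia)).
  rewrite Rabs_right in Hp0 by (apply Rle_ge, pow_le; lra).
  assert (Htail : (1 + s) ^ 2 * (B * q ^ (N - 2 * n) / (1 - q)) <= eps).
  { replace ((1 + s) ^ 2 * (B * q ^ (N - 2 * n) / (1 - q))) with (c * q ^ (N - 2 * n))
      by (unfold c; field; lra).
    apply Rle_trans with ((c + 1) * (eps / (c + 1))); [|right; field; lra].
    apply Rmult_le_compat; [lra|apply pow_le; lra|lra|lra]. }
  fold s in Hbound. lra.
Qed.

Lemma coef_le_M_sub_inv n : (2 <= n)%nat -> Cmod (a n) <= M - 1 / M.
Proof.
  intros Hn. set (s := / M).
  assert (Hs : 0 < s) by (apply Rinv_0_lt_compat, M_pos).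
  pose proof (Cmod_ge_0 (a n)) as Ha.
  assert (Hlim : Cmod (a n) + 2 * s <= M * (1 + s ^ 2)).
  { apply Rle_plus_epsilon. intros eps Heps.
    set (c := INR n * Cmod (a n) + 2 * s + 1).
    assert (Hc : 0 < c) by (pose proof (pos_INR n); unfold c; nra).
    set (del := Rmin (1/2) (eps / c)).
    assert (Hdel0 : 0 < del) by (apply Rmin_pos; [lra|apply Rdiv_lt_0_compat; lra]).
    assert (Hdel1 : del <= 1/2) by apply Rmin_l.
    assert (Hdel2 : del * c <= eps).
    { apply Rle_trans with (eps / c * c); [apply Rmult_le_compat_r, Rmin_r; lra|right; field; lra]. }
    pose proof (coef_radius_bound n (1 - del) Hn ltac:(lra)) as Hr.
    pose proof (pow_ge_Bernoulli (1 - del) n ltac:(lra)) as Hb.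
    replace (1 - (1 - del)) with del in Hb by ring.
    assert (Cmod (a n) * (1 - INR n * del) <= Cmod (a n) * (1 - del) ^ n)
      by (apply Rmult_le_compat_l; lra).
    fold s in Hr. unfold c in Hdel2. pose proof (pos_INR n). nra. }
  replace (M - 1 / M) with (M * (1 + s ^ 2) - 2 * s) by (unfold s; field; lra).
  lra.
Qed.

End CoefficientBound.

(** * Estimates for [f - id] *)

Lemma Cmod_pow_sub_le (z1 z2 : C) r j : Cmod z1 <= r -> Cmod z2 <= r ->
  Cmod (z1 ^ S j - z2 ^ S j)%C <= INR (S j) * r ^ j * Cmod (z1 - z2)%C.
Proof.
  intros H1 H2. pose proof (Cmod_ge_0 z1). pose proof (Cmod_ge_0 (z1 - z2)%C).
  induction j as [|j IH].
  - simpl. replace (z1 * 1 - z2 * 1)%C with (z1 - z2)%C by ring. lra.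
  - replace (z1 ^ S (S j) - z2 ^ S (S j))%C
      with (z1 * (z1 ^ S j - z2 ^ S j) + z2 ^ S j * (z1 - z2))%C by (simpl; ring).
    eapply Rle_trans; [apply Cmod_triangle|]. rewrite !Cmod_mult, Cmod_pow.
    assert (Cmod z2 ^ S j <= r ^ S j) by (apply pow_incr; split; [apply Cmod_ge_0|auto]).
    assert (0 <= r ^ j) by (apply pow_le; lra).
    assert (Cmod z1 * Cmod (z1 ^ S j - z2 ^ S j)%C <= r * (INR (S j) * r ^ j * Cmod (z1 - z2)%C))
      by (apply Rmult_le_compat; auto; apply Cmod_ge_0).
    assert (Cmod z2 ^ S j * Cmod (z1 - z2)%C <= r ^ S j * Cmod (z1 - z2)%C)
      by (apply Rmult_le_compat_r; auto).
    replace (INR (S (S j)) * r ^ S j * Cmod (z1 - z2)%C)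
      with (r * (INR (S j) * r ^ j * Cmod (z1 - z2)%C) + r ^ S j * Cmod (z1 - z2)%C)
      by (rewrite (S_INR (S j)); simpl; ring).
    lra.
Qed.

Section NormalizedSeries.

Variables (f : C -> C) (a : nat -> C) (A : R).
Hypothesis f_series : forall z, Cmod z < 1 -> is_series (fun k => a k * z ^ k)%C (f z).
Hypothesis a0 : a O = RtoC 0.
Hypothesis a1 : a 1%nat = RtoC 1.
Hypothesis A_nonneg : 0 <= A.
Hypothesis coef_le : forall k, (2 <= k)%nat -> Cmod (a k) <= A.

Lemma csum_normalized_series z L :
  csum (fun k => a k * z ^ k)%C (2 + L) = (z + csum (fun k => a (2 + k)%nat * z ^ (2 + k))%C L)%C.
Proof. rewrite csum_series_head, a0, a1. ring. Qed.

Lemma Cmod_sub_id_le z r : Cmod z <= r -> r < 1 -> Cmod (f z - z)%C <= A * (r ^ 2 / (1 - r)).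
Proof.
  intros Hz Hr. pose proof (Cmod_ge_0 z).
  apply (series_sub_le f a f_series); [lra|]. intros L.
  rewrite csum_normalized_series.
  replace (z + _ - z)%C with (csum (fun k => a (2 + k)%nat * z ^ (2 + k))%C L) by ring.
  eapply Rle_trans; [apply Cmod_csum_le|].
  apply Rle_trans with (rsum (fun k => (A * r ^ 2) * r ^ k) L).
  - apply rsum_le. intros k _. rewrite Cmod_mult, Cmod_pow.
    replace (A * r ^ 2 * r ^ k) with (A * r ^ (2 + k)) by (rewrite pow_add; ring).
    apply Rmult_le_compat; [apply Cmod_ge_0|apply pow_le, Cmod_ge_0|apply coef_le; lia|].
    apply pow_incr. lra.
  - rewrite rsum_mult_l.
    replace (A * (r ^ 2 / (1 - r))) with (A * r ^ 2 * (1 / (1 - r))) by (field; lra).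
    apply Rmult_le_compat_l; [apply Rmult_le_pos; [lra|apply pow_le; lra]|].
    apply rsum_geom_le. lra.
Qed.

Lemma Cmod_increment_sub_le z1 z2 r : Cmod z1 <= r -> Cmod z2 <= r -> r < 1 ->
  Cmod (f z1 - f z2 - (z1 - z2))%C <= A * Cmod (z1 - z2)%C * ((2 * r - r ^ 2) / (1 - r) ^ 2).
Proof.
  intros H1 H2 Hr. pose proof (Cmod_ge_0 z1). pose proof (Cmod_ge_0 (z1 - z2)%C).
  apply (series_diff_sub_le f a f_series); [lra|lra|]. intros L.
  rewrite !csum_normalized_series.
  replace (z1 + _ - (z2 + _) - (z1 - z2))%C
    with (csum (fun k => a (2 + k)%nat * (z1 ^ (2 + k) - z2 ^ (2 + k)))%C L)
    by (rewrite (csum_ext _ (fun k => a (2 + k)%nat * z1 ^ (2 + k) - a (2 + k)%nat * z2 ^ (2 + k))%C)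
          by (intros; ring); rewrite csum_minus; ring).
  eapply Rle_trans; [apply Cmod_csum_le|].
  apply Rle_trans with (rsum (fun k => (A * Cmod (z1 - z2)%C) * (INR (S (S k)) * r ^ S k)) L).
  - apply rsum_le. intros k _. rewrite Cmod_mult.
    replace (A * Cmod (z1 - z2)%C * (INR (S (S k)) * r ^ S k))
      with (A * (INR (S (S k)) * r ^ S k * Cmod (z1 - z2)%C)) by ring.
    apply Rmult_le_compat; [apply Cmod_ge_0|apply Cmod_ge_0|apply coef_le; lia|].
    apply Cmod_pow_sub_le; assumption.
  - rewrite rsum_mult_l. apply Rmult_le_compat_l; [apply Rmult_le_pos; lra|].
    pose proof (rsum_geom_deriv_le r (S L) ltac:(lra)) as Hd.
    rewrite rsum_shift in Hd. replace (INR 1 * r ^ 0) with 1 in Hd by (simpl; ring).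
    replace ((2 * r - r ^ 2) / (1 - r) ^ 2) with (1 / (1 - r) ^ 2 - 1) by (field; lra).
    lra.
Qed.

End NormalizedSeries.

(** * Contractions of a closed disk *)

Lemma Cmod_le_Rabs_fst_snd (c : C) : Cmod c <= 2 * (Rabs (fst c) + Rabs (snd c)).
Proof.
  eapply Rle_trans; [apply Cmod_2Rmax|].
  assert (sqrt 2 < 2) by (rewrite <- (sqrt_square 2) at 2 by lra; apply sqrt_lt_1; lra).
  pose proof (sqrt_pos 2). pose proof (Rabs_pos (fst c)). pose proof (Rabs_pos (snd c)).
  assert (Rmax (Rabs (fst c)) (Rabs (snd c)) <= Rabs (fst c) + Rabs (snd c)) by (apply Rmax_lub; lra).
  assert (0 <= Rmax (Rabs (fst c)) (Rabs (snd c))) by (eapply Rle_trans; [|apply Rmax_l]; lra).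
  nra.
Qed.

Lemma C_Cauchy_converges (u : nat -> C) :
  (forall eps, 0 < eps -> exists N, forall n m, (N <= n)%nat -> (N <= m)%nat -> Cmod (u m - u n)%C < eps) ->
  exists l, forall eps, 0 < eps -> exists N, forall n, (N <= n)%nat -> Cmod (u n - l)%C < eps.
Proof.
  intros Hu.
  assert (Hfst : Cauchy_crit (fun n => fst (u n))).
  { intros eps Heps. destruct (Hu eps Heps) as [N HN]. exists N. intros n m Hn Hm.
    eapply Rle_lt_trans; [|apply (HN m n Hm Hn)].
    eapply Rle_trans; [|apply Rmax_Cmod]. apply Rmax_l. }
  assert (Hsnd : Cauchy_crit (fun n => snd (u n))).
  { intros eps Heps. destruct (Hu eps Heps) as [N HN]. exists N. intros n m Hn Hm.
    eapply Rle_lt_trans; [|apply (HN m n Hm Hn)].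
    eapply Rle_trans; [|apply Rmax_Cmod]. apply Rmax_r. }
  destruct (Rcomplete.R_complete _ Hfst) as [x Hx].
  destruct (Rcomplete.R_complete _ Hsnd) as [y Hy].
  exists (x, y). intros eps Heps.
  destruct (Hx (eps / 8) ltac:(lra)) as [N1 H1]. destruct (Hy (eps / 8) ltac:(lra)) as [N2 H2].
  exists (N1 + N2)%nat. intros n Hn.
  specialize (H1 n ltac:(lia)). specialize (H2 n ltac:(lia)). unfold R_dist in H1, H2.
  eapply Rle_lt_trans; [apply Cmod_le_Rabs_fst_snd|]. simpl. unfold Rminus in H1, H2. lra.
Qed.

Section Contraction.

Variables (T : C -> C) (r k : R).
Hypothesis r_nonneg : 0 <= r.
Hypothesis k_range : 0 <= k < 1.
Hypothesis T_maps_disk : forall z, Cmod z <= r -> Cmod (T z) <= r.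
Hypothesis T_contraction : forall z1 z2, Cmod z1 <= r -> Cmod z2 <= r ->
  Cmod (T z1 - T z2)%C <= k * Cmod (z1 - z2)%C.

Let u n := Nat.iter n T (RtoC 0).

Lemma iterate_in_disk n : Cmod (u n) <= r.
Proof.
  unfold u. apply Nat.iter_invariant; [apply T_maps_disk|]. rewrite Cmod_0. exact r_nonneg.
Qed.

Lemma iterate_step_le n : Cmod (u (S n) - u n)%C <= k ^ n * r.
Proof.
  induction n as [|n IH].
  - unfold u. simpl. replace (T 0 - 0)%C with (T 0) by ring. rewrite Rmult_1_l.
    apply T_maps_disk. rewrite Cmod_0. exact r_nonneg.
  - change (u (S (S n))) with (T (u (S n))). change (u (S n)) with (T (u n)) at 2.
    eapply Rle_trans; [apply T_contraction; apply iterate_in_disk|].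
    change (T (u n)) with (u (S n)). simpl pow. rewrite Rmult_assoc.
    apply Rmult_le_compat_l; [lra|exact IH].
Qed.

Lemma iterate_dist_le n p : Cmod (u (n + p)%nat - u n)%C <= r * k ^ n / (1 - k).
Proof.
  assert (Hkn : 0 <= r * k ^ n) by (apply Rmult_le_pos; [|apply pow_le]; lra).
  apply Rle_trans with (r * k ^ n * (1 - k ^ p) / (1 - k)).
  - induction p as [|p IH].
    + rewrite Nat.add_0_r. replace (u n - u n)%C with (RtoC 0) by ring. rewrite Cmod_0. simpl. right. field. lra.
    + replace (u (n + S p)%nat - u n)%C with ((u (S (n + p)) - u (n + p)%nat) + (u (n + p)%nat - u n))%C
        by (rewrite Nat.add_succ_r; ring).
      eapply Rle_trans; [apply Cmod_triangle|].
      pose proof (iterate_step_le (n + p)) as Hstep. rewrite pow_add in Hstep.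
      replace (r * k ^ n * (1 - k ^ S p) / (1 - k))
        with (k ^ n * k ^ p * r + r * k ^ n * (1 - k ^ p) / (1 - k)) by (simpl; field; lra).
      lra.
  - unfold Rdiv. apply Rmult_le_compat_r; [apply Rlt_le, Rinv_0_lt_compat; lra|].
    assert (0 <= k ^ p) by (apply pow_le; lra). nra.
Qed.

Lemma iterate_Cauchy eps : 0 < eps ->
  exists N, forall n m, (N <= n)%nat -> (N <= m)%nat -> Cmod (u m - u n)%C < eps.
Proof.
  intros Heps.
  destruct (pow_lt_1_zero k ltac:(rewrite Rabs_right; lra) (eps * (1 - k) / (r + 1)))
    as [N HN]; [apply Rdiv_lt_0_compat; nra|].
  assert (Hfwd : forall n m, (N <= n)%nat -> (n <= m)%nat -> Cmod (u m - u n)%C < eps).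
  { intros n m Hn Hm. replace m with (n + (m - n))%nat by lia.
    eapply Rle_lt_trans; [apply iterate_dist_le|].
    specialize (HN n Hn). rewrite Rabs_right in HN by (apply Rle_ge, pow_le; lra).
    apply Rmult_lt_reg_r with (1 - k); [lra|].
    replace (r * k ^ n / (1 - k) * (1 - k)) with (r * k ^ n) by (field; lra).
    apply Rle_lt_trans with (r * (eps * (1 - k) / (r + 1))); [apply Rmult_le_compat_l; lra|].
    apply Rmult_lt_reg_r with (r + 1); [lra|].
    replace (r * (eps * (1 - k) / (r + 1)) * (r + 1)) with (r * (eps * (1 - k))) by (field; lra).
    assert (0 < eps * (1 - k)) by nra. nra. }
  exists N. intros n m Hn Hm. destruct (Nat.le_ge_cases n m); [apply Hfwd; auto|].
  rewrite <- Cmod_opp. replace (- (u m - u n))%C with (u n - u m)%C by ring. apply Hfwd; auto.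
Qed.

Lemma contraction_fixed_point : exists z, Cmod z <= r /\ T z = z.
Proof.
  destruct (C_Cauchy_converges u iterate_Cauchy) as [l Hl].
  assert (Hlr : Cmod l <= r).
  { apply Rle_plus_epsilon. intros eps Heps. destruct (Hl eps Heps) as [N HN].
    specialize (HN N (le_n N)). pose proof (iterate_in_disk N).
    replace l with (u N - (u N - l))%C by ring.
    eapply Rle_trans; [apply Cmod_triangle|]. rewrite Cmod_opp. lra. }
  exists l. split; [exact Hlr|].
  apply Ceq_minus, Cmod_eq_0, Rle_antisym; [|apply Cmod_ge_0].
  apply Rle_plus_epsilon. intros eps Heps. destruct (Hl (eps / 2) ltac:(lra)) as [N HN].
  pose proof (HN N (le_n N)) as HN1. pose proof (HN (S N) ltac:(lia)) as HN2.
  pose proof (T_contraction l (u N) Hlr (iterate_in_disk N)) as Hc.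
  replace (l - u N)%C with (- (u N - l))%C in Hc by ring. rewrite Cmod_opp in Hc.
  replace (T l - l)%C with ((T l - T (u N)) + (u (S N) - l))%C by (unfold u; simpl; ring).
  eapply Rle_trans; [apply Cmod_triangle|].
  pose proof (Cmod_ge_0 (u N - l)%C). nra.
Qed.

End Contraction.

(** * The map [conj z * G z + H z] *)

Section Radii.

Variables M1 M2 : R.
Hypothesis A1_nonneg : 0 <= M1 - 1 / M1.
Hypothesis A2_nonneg : 0 <= M2 - 1 / M2.

Lemma eq_rho3_decrease r rho : 0 <= r < rho -> rho < 1 ->
  eq_rho3 M1 M2 rho + 2 * (rho - r) <= eq_rho3 M1 M2 r.
Proof.
  intros Hr Hrho. unfold eq_rho3.
  replace ((2 * r - r ^ 2) / (1 - r) ^ 2) with (/ (1 - r) ^ 2 - 1) by (field; lra).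
  replace ((2 * rho - rho ^ 2) / (1 - rho) ^ 2) with (/ (1 - rho) ^ 2 - 1) by (field; lra).
  assert (Hinv : / (1 - r) ^ 2 <= / (1 - rho) ^ 2)
    by (apply Rinv_le_contravar; [apply pow_lt; lra|apply pow_incr; lra]).
  assert (Hcubic : (3 - 2 * r) * r ^ 2 <= (3 - 2 * rho) * rho ^ 2).
  { assert (0 <= (rho - r) * (3 * (rho + r) - 2 * (rho * rho + rho * r + r * r)))
      by (apply Rmult_le_pos; nra).
    simpl. nra. }
  assert (Hfrac : (3 - 2 * r) * r ^ 2 / (1 - r) ^ 2 <= (3 - 2 * rho) * rho ^ 2 / (1 - rho) ^ 2).
  { apply Rmult_le_compat; auto; [|apply Rlt_le, Rinv_0_lt_compat, pow_lt; lra].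
    apply Rmult_le_pos; [lra|apply pow_le; lra]. }
  assert ((M2 - 1 / M2) * / (1 - r) ^ 2 <= (M2 - 1 / M2) * / (1 - rho) ^ 2)
    by (apply Rmult_le_compat_l; auto).
  assert ((M1 - 1 / M1) * ((3 - 2 * r) * r ^ 2 / (1 - r) ^ 2)
          <= (M1 - 1 / M1) * ((3 - 2 * rho) * rho ^ 2 / (1 - rho) ^ 2))
    by (apply Rmult_le_compat_l; auto).
  lra.
Qed.

Lemma eq_rho3_le_1 r : 0 <= r < 1 -> eq_rho3 M1 M2 r <= 1.
Proof.
  intros Hr. unfold eq_rho3.
  assert (Hd : 0 < / (1 - r) ^ 2) by (apply Rinv_0_lt_compat, pow_lt; lra).
  assert (0 <= (2 * r - r ^ 2) / (1 - r) ^ 2) by (apply Rmult_le_pos; [simpl; nra|lra]).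
  assert (0 <= (3 - 2 * r) * r ^ 2 / (1 - r) ^ 2)
    by (apply Rmult_le_pos; [apply Rmult_le_pos; [lra|apply pow_le; lra]|lra]).
  assert (0 <= (M2 - 1 / M2) * ((2 * r - r ^ 2) / (1 - r) ^ 2)) by (apply Rmult_le_pos; auto).
  assert (0 <= (M1 - 1 / M1) * ((3 - 2 * r) * r ^ 2 / (1 - r) ^ 2)) by (apply Rmult_le_pos; auto).
  lra.
Qed.

Lemma sigma3_of_increment_le r rho : 0 <= r <= rho -> rho < 1 ->
  sigma3_of M1 M2 rho - sigma3_of M1 M2 r <= rho - r.
Proof.
  intros Hr Hrho. unfold sigma3_of.
  assert (Hinv : / (1 - r) <= / (1 - rho)) by (apply Rinv_le_contravar; lra).
  assert (Hinv0 : 0 <= / (1 - r)) by (apply Rlt_le, Rinv_0_lt_compat; lra).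
  assert (r ^ 2 / (1 - r) <= rho ^ 2 / (1 - rho))
    by (apply Rmult_le_compat; auto; [apply pow_le; lra|apply pow_incr; lra]).
  assert (r ^ 3 / (1 - r) <= rho ^ 3 / (1 - rho))
    by (apply Rmult_le_compat; auto; [apply pow_le; lra|apply pow_incr; lra]).
  assert (r ^ 2 <= rho ^ 2) by (apply pow_incr; lra).
  assert ((M2 - 1 / M2) * (r ^ 2 / (1 - r)) <= (M2 - 1 / M2) * (rho ^ 2 / (1 - rho)))
    by (apply Rmult_le_compat_l; auto).
  assert ((M1 - 1 / M1) * (r ^ 3 / (1 - r)) <= (M1 - 1 / M1) * (rho ^ 3 / (1 - rho)))
    by (apply Rmult_le_compat_l; auto).
  lra.
Qed.

Lemma sigma3_of_le r : 0 <= r < 1 -> sigma3_of M1 M2 r <= r.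
Proof.
  intros Hr. pose proof (sigma3_of_increment_le 0 r ltac:(lra) ltac:(lra)) as Hinc.
  replace (sigma3_of M1 M2 0) with 0 in Hinc by (unfold sigma3_of, Rdiv; ring). lra.
Qed.

End Radii.

Section HarmonicPerturbation.

Variables (G H : C -> C) (M1 M2 : R).
Let A1 := M1 - 1 / M1.
Let A2 := M2 - 1 / M2.
Hypothesis A1_nonneg : 0 <= A1.
Hypothesis A2_nonneg : 0 <= A2.
Hypothesis G_sub_id : forall z r, Cmod z <= r -> r < 1 -> Cmod (G z - z)%C <= A1 * (r ^ 2 / (1 - r)).
Hypothesis H_sub_id : forall z r, Cmod z <= r -> r < 1 -> Cmod (H z - z)%C <= A2 * (r ^ 2 / (1 - r)).
Hypothesis G_increment : forall z1 z2 r, Cmod z1 <= r -> Cmod z2 <= r -> r < 1 ->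
  Cmod (G z1 - G z2 - (z1 - z2))%C <= A1 * Cmod (z1 - z2)%C * ((2 * r - r ^ 2) / (1 - r) ^ 2).
Hypothesis H_increment : forall z1 z2 r, Cmod z1 <= r -> Cmod z2 <= r -> r < 1 ->
  Cmod (H z1 - H z2 - (z1 - z2))%C <= A2 * Cmod (z1 - z2)%C * ((2 * r - r ^ 2) / (1 - r) ^ 2).

Let F z := (Cconj z * G z + H z)%C.
Let E z := (F z - z)%C.

Lemma Cmod_G_le z r : Cmod z <= r -> r < 1 -> Cmod (G z) <= r + A1 * (r ^ 2 / (1 - r)).
Proof.
  intros Hz Hr. replace (G z) with (z + (G z - z))%C by ring.
  eapply Rle_trans; [apply Cmod_triangle|]. pose proof (G_sub_id z r Hz Hr). lra.
Qed.

Lemma perturbation_lipschitz z1 z2 r : Cmod z1 <= r -> Cmod z2 <= r -> 0 <= r < 1 ->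
  Cmod (E z1 - E z2)%C <= (1 - eq_rho3 M1 M2 r) * Cmod (z1 - z2)%C.
Proof.
  intros H1 H2 Hr. set (d := Cmod (z1 - z2)%C). assert (Hd : 0 <= d) by apply Cmod_ge_0.
  replace (E z1 - E z2)%C with (Cconj (z1 - z2) * G z1 + Cconj z2 * (G z1 - G z2)
                                + (H z1 - H z2 - (z1 - z2)))%C
    by (unfold E, F; rewrite Cminus_conj; ring).
  assert (HG : Cmod (G z1 - G z2)%C <= d + A1 * d * ((2 * r - r ^ 2) / (1 - r) ^ 2)).
  { replace (G z1 - G z2)%C with ((z1 - z2) + (G z1 - G z2 - (z1 - z2)))%C by ring.
    eapply Rle_trans; [apply Cmod_triangle|].
    pose proof (G_increment z1 z2 r H1 H2 ltac:(lra)) as HGi. fold d in HGi |- *. lra. }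
  pose proof (H_increment z1 z2 r H1 H2 ltac:(lra)) as HH. fold d in HH.
  eapply Rle_trans; [apply Cmod_triangle|].
  eapply Rle_trans; [apply Rplus_le_compat_r, Cmod_triangle|].
  rewrite !Cmod_mult, !Cmod_conj. fold d.
  assert (d * Cmod (G z1) <= d * (r + A1 * (r ^ 2 / (1 - r))))
    by (apply Rmult_le_compat_l; [exact Hd|apply Cmod_G_le; lra]).
  assert (Cmod z2 * Cmod (G z1 - G z2)%C <= r * (d + A1 * d * ((2 * r - r ^ 2) / (1 - r) ^ 2)))
    by (apply Rmult_le_compat; auto; apply Cmod_ge_0).
  replace ((1 - eq_rho3 M1 M2 r) * d)
    with (d * (r + A1 * (r ^ 2 / (1 - r))) + r * (d + A1 * d * ((2 * r - r ^ 2) / (1 - r) ^ 2))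
          + A2 * d * ((2 * r - r ^ 2) / (1 - r) ^ 2))
    by (unfold eq_rho3; fold A1 A2; field; lra).
  lra.
Qed.

Lemma Cmod_perturbation_le z r : Cmod z <= r -> 0 <= r < 1 -> Cmod (E z) <= r - sigma3_of M1 M2 r.
Proof.
  intros Hz Hr. replace (E z) with (Cconj z * G z + (H z - z))%C by (unfold E, F; ring).
  eapply Rle_trans; [apply Cmod_triangle|]. rewrite Cmod_mult, Cmod_conj.
  pose proof (H_sub_id z r Hz ltac:(lra)).
  assert (Cmod z * Cmod (G z) <= r * (r + A1 * (r ^ 2 / (1 - r))))
    by (apply Rmult_le_compat; [apply Cmod_ge_0|apply Cmod_ge_0|exact Hz|apply Cmod_G_le; lra]).
  replace (r - sigma3_of M1 M2 r) with (r * (r + A1 * (r ^ 2 / (1 - r))) + A2 * (r ^ 2 / (1 - r)))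
    by (unfold sigma3_of; fold A1 A2; field; lra).
  lra.
Qed.

Lemma harmonic_univalent rho : 0 < rho < 1 -> eq_rho3 M1 M2 rho = 0 -> univalent_on_disk rho F.
Proof.
  intros Hrho Heq z w Hz Hw HF. unfold in_disk in Hz, Hw.
  set (r := Rmax (Cmod z) (Cmod w)).
  assert (Hr0 : 0 <= r) by (eapply Rle_trans; [apply Cmod_ge_0|apply Rmax_l]).
  assert (Hr1 : r < rho) by (apply Rmax_lub_lt; auto).
  pose proof (perturbation_lipschitz z w r (Rmax_l _ _) (Rmax_r _ _) ltac:(lra)) as HL.
  pose proof (eq_rho3_decrease M1 M2 A1_nonneg A2_nonneg r rho ltac:(lra) ltac:(lra)) as Hdec.
  replace (E z - E w)%C with (- (z - w))%C in HL by (unfold E; rewrite HF; ring).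
  rewrite Cmod_opp in HL. pose proof (Cmod_ge_0 (z - w)%C).
  apply Ceq_minus, Cmod_eq_0. nra.
Qed.

Lemma harmonic_covers rho : 0 < rho < 1 -> eq_rho3 M1 M2 rho = 0 ->
  forall w, Cmod w < sigma3_of M1 M2 rho -> exists z, Cmod z < rho /\ F z = w.
Proof.
  intros Hrho Heq w Hw. pose proof (Cmod_ge_0 w) as Hw0.
  pose proof (sigma3_of_le M1 M2 A1_nonneg A2_nonneg rho ltac:(lra)) as Hsig.
  (* on a slightly smaller disk the margin left by |w| < sigma3(rho) survives *)
  set (r := rho - (sigma3_of M1 M2 rho - Cmod w) / 2).
  assert (Hr : rho / 2 <= r < rho) by (unfold r; lra).
  assert (Hwr : Cmod w <= sigma3_of M1 M2 r).
  { pose proof (sigma3_of_increment_le M1 M2 A1_nonneg A2_nonneg r rho ltac:(lra) ltac:(lra)).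
    unfold r in *. lra. }
  pose proof (eq_rho3_decrease M1 M2 A1_nonneg A2_nonneg r rho ltac:(lra) ltac:(lra)) as Hdec.
  pose proof (eq_rho3_le_1 M1 M2 A1_nonneg A2_nonneg r ltac:(lra)) as Hle1.
  destruct (contraction_fixed_point (fun z => w - E z)%C r (1 - eq_rho3 M1 M2 r))
    as [z [Hz Hfix]]; [lra|lra| | |].
  - intros z Hz. eapply Rle_trans; [apply Cmod_triangle|]. rewrite Cmod_opp.
    pose proof (Cmod_perturbation_le z r Hz ltac:(lra)). lra.
  - intros z1 z2 Hz1 Hz2. replace (w - E z1 - (w - E z2))%C with (- (E z1 - E z2))%C by ring.
    rewrite Cmod_opp. apply perturbation_lipschitz; auto. lra.
  - exists z. split; [lra|]. replace w with (w - E z + E z)%C by ring. rewrite Hfix. unfold E. ring.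
Qed.

End HarmonicPerturbation.

Lemma analytic_in_D_series (f : C -> C) : analytic_in_D f ->
  exists a : nat -> C, forall z, Cmod z < 1 -> is_series (fun k => a k * z ^ k)%C (f z).
Proof.
  intros [a Ha]. exists a. exact Ha.
Qed.

Lemma normalized_bounded_estimates (f : C -> C) (M : R) :
  analytic_in_D f -> 0 < M -> f (RtoC 0) = RtoC 0 ->
  is_derive (K := C_AbsRing) (V := C_NormedModule) f (RtoC 0) (RtoC 1) ->
  (forall z, in_disk 1 z -> Cmod (f z) <= M) ->
  0 <= M - 1 / M
  /\ (forall z r, Cmod z <= r -> r < 1 -> Cmod (f z - z)%C <= (M - 1 / M) * (r ^ 2 / (1 - r)))
  /\ (forall z1 z2 r, Cmod z1 <= r -> Cmod z2 <= r -> r < 1 ->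
        Cmod (f z1 - f z2 - (z1 - z2))%C
        <= (M - 1 / M) * Cmod (z1 - z2)%C * ((2 * r - r ^ 2) / (1 - r) ^ 2)).
Proof.
  intros Hf HM Hf0 Hd Hbound.
  destruct (analytic_in_D_series f Hf) as [a Ha].
  assert (Ha0 : a O = RtoC 0) by (rewrite (coef0_eq f a Ha); exact Hf0).
  assert (Ha1 : a 1%nat = RtoC 1) by exact (coef1_eq_derive f a Ha _ Hd).
  pose proof (coef_le_M_sub_inv f a M Ha Ha0 Ha1 HM Hbound) as Hcoef.
  assert (HA : 0 <= M - 1 / M) by (eapply Rle_trans; [apply Cmod_ge_0|apply (Hcoef 2%nat); lia]).
  split; [exact HA|split].
  - exact (Cmod_sub_id_le f a (M - 1 / M) Ha Ha0 Ha1 HA Hcoef).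
  - exact (Cmod_increment_sub_le f a (M - 1 / M) Ha Ha0 Ha1 HA Hcoef).
Qed.

Theorem theorem2p3 (M1 M2 : R) (G H : C -> C) (rho3 : R) :
  0 < M1 -> 0 < M2 ->
  analytic_in_D G -> analytic_in_D H ->
  G (RtoC 0) = RtoC 0 -> H (RtoC 0) = RtoC 0 ->
  is_derive (K := C_AbsRing) (V := C_NormedModule) G (RtoC 0) (RtoC 1) ->
  is_derive (K := C_AbsRing) (V := C_NormedModule) H (RtoC 0) (RtoC 1) ->
  (forall z : C, in_disk 1 z -> Cmod (G z) <= M1) ->
  (forall z : C, in_disk 1 z -> Cmod (H z) <= M2) ->
  (* rho3 is the unique root in (0,1) of the equation *)
  0 < rho3 < 1 -> eq_rho3 M1 M2 rho3 = 0 ->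
  (forall r : R, 0 < r < 1 -> eq_rho3 M1 M2 r = 0 -> r = rho3) ->
  let F := fun z : C => Cplus (Cmult (Cconj z) (G z)) (H z) in
  let sigma3 := sigma3_of M1 M2 rho3 in
  univalent_on_disk rho3 F /\
  (forall w : C, in_disk sigma3 w -> exists z : C, in_disk rho3 z /\ F z = w).
Proof.
  intros HM1 HM2 HG HH HG0 HH0 HdG HdH HbG HbH Hrho Heq _ F sigma3.
  destruct (normalized_bounded_estimates G M1 HG HM1 HG0 HdG HbG) as [HA1 [HG1 HG2]].
  destruct (normalized_bounded_estimates H M2 HH HM2 HH0 HdH HbH) as [HA2 [HH1 HH2]].
  split.
  - apply (harmonic_univalent G H M1 M2); assumption.
  - apply (harmonic_covers G H M1 M2); assumption.
Qed.
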